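(* Let $X,Y$ be separable Banach spaces, $S:X\to X$ and $T:Y\to Y$ bounded invertible linear operators, and $\Pi:X\to Y$ a bounded linear surjection with $\Pi\circ S=T\circ\Pi$. Suppose $\Pi$ admits a strong bounded selector. If $T$ is Li-Yorke chaotic, then $S$ is Li-Yorke chaotic.
   Context: $\Pi$ admits a strong bounded selector if there is $L\ge1$ such that for every $y\in Y$ there exists $x\in\Pi^{-1}(y)$ with $\|S^n x\|\le L\|T^n y\|$ and $\|T^n y\|\le L\|S^nx\|$ for all $n\in\mathbb Z$. An operator $T$ is Li-Yorke chaotic if there exists a vector $y$ with $\liminf_{n\to\infty}\|T^ny\|=0$ and $\limsup_{n\to\infty}\|T^ny\|=\infty$. *)

From HB Require Import structures.
From mathcomp Require Import all_boot all_order all_algebra.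
From mathcomp Require Import all_classical all_reals all_analysis.
Set Implicit Arguments. Unset Strict Implicit. Unset Printing Implicit Defensive.
Import Order.TTheory GRing.Theory Num.Theory.
Import numFieldNormedType.Exports.
Local Open Scope classical_set_scope.
Local Open Scope ring_scope.

Definition separable (X : topologicalType) : Prop :=
  exists D : set X, countable D /\ dense D.

Definition bounded_linear {R : realType} (X Y : normedModType R) (f : X -> Y) : Prop :=
  linear f /\ continuous f.

(* Integer iterate of an invertible map f with inverse finv:
   f^n for n >= 0 and finv^(|n|) for n < 0. *)
Definition zpow {X : Type} (f finv : X -> X) (n : int) : X -> X :=
  match n with
  | Posz k => iter k f
  | Negz k => iter k.+1 finv
  end.

Definition strong_bounded_selector {R : realType} (X Y : normedModType R)
  (S Sinv : X -> X) (T Tinv : Y -> Y) (Pi : X -> Y) : Prop :=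
  exists L : R, 1 <= L /\
    forall y : Y, exists x : X, Pi x = y /\
      forall n : int,
        `|zpow S Sinv n x| <= L * `|zpow T Tinv n y| /\
        `|zpow T Tinv n y| <= L * `|zpow S Sinv n x|.

Definition li_yorke_chaotic {R : realType} (Y : normedModType R) (T : Y -> Y) : Prop :=
  exists y : Y,
    limn_einf (fun n : nat => (`|iter n T y|)%:E) = 0%E /\
    limn_esup (fun n : nat => (`|iter n T y|)%:E) = +oo%E.

From HB Require Import structures.
From mathcomp Require Import all_boot all_order all_algebra.
From mathcomp Require Import all_classical all_reals all_analysis.
Set Implicit Arguments. Unset Strict Implicit. Unset Printing Implicit Defensive.
Import Order.TTheory GRing.Theory Num.Theory.
Import numFieldNormedType.Exports.
Local Open Scope classical_set_scope.
Local Open Scope ring_scope.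

(* The selector gives, for the Li-Yorke vector y of T, a lift x whose forward
   orbit under S has norms within a factor L of those of the orbit of y.
   Liminf and limsup are monotone and commute with multiplication by L > 0,
   so liminf ||S^n x|| <= L * 0 = 0 and limsup ||S^n x|| >= (+oo) / L = +oo. *)

Section limn_esup_einf_monotone.
Local Open Scope ereal_scope.
Context {R : realType}.
Implicit Types u v : (\bar R)^nat.

Lemma le_esups u v : (forall n, u n <= v n) -> forall n, esups u n <= esups v n.
Proof.
move=> uv n /=; apply: ge_ereal_sup => _ [k /= nk <-].
by apply: le_ereal_sup_tmp; exists (v k); [exists k | exact: uv].
Qed.

Lemma le_einfs u v : (forall n, u n <= v n) -> forall n, einfs u n <= einfs v n.
Proof.
move=> uv n /=; apply: le_ereal_inf_tmp => _ [k /= nk <-].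
by apply: le_trans (uv k); apply: ereal_inf_lbound; exists k.
Qed.

Lemma le_limn_esup u v : (forall n, u n <= v n) -> limn_esup u <= limn_esup v.
Proof.
move=> uv; rewrite !limn_esup_lim.
by apply: lee_lim; [exact: is_cvg_esups | exact: is_cvg_esups | exact/nearW/le_esups].
Qed.

Lemma le_limn_einf u v : (forall n, u n <= v n) -> limn_einf u <= limn_einf v.
Proof.
move=> uv; rewrite !limn_einf_lim.
by apply: lee_lim; [exact: is_cvg_einfs | exact: is_cvg_einfs | exact/nearW/le_einfs].
Qed.

Lemma limn_einf_ge0 u : (forall n, 0 <= u n) -> 0 <= limn_einf u.
Proof.
move=> u_ge0; rewrite -(cvg_limn_einf_sup (@cvg_cst _ 0 nat \oo _)).1.
exact: le_limn_einf.
Qed.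

Lemma limn_einfZl u (c : R) : (0 < c)%R ->
  limn_einf (fun n => c%:E * u n) = c%:E * limn_einf u.
Proof.
move=> c_gt0; rewrite !limn_einf_lim -limeMl //; last exact: is_cvg_einfs.
suff -> : einfs (fun n => c%:E * u n) = (fun n => c%:E * einfs u n) by [].
apply/funext => n /=.
by rewrite -ereal_inf_pZl // image_comp.
Qed.

Lemma limn_esupZl u (c : R) : (0 < c)%R ->
  limn_esup (fun n => c%:E * u n) = c%:E * limn_esup u.
Proof.
move=> c_gt0; rewrite !limn_esup_lim -limeMl //; last exact: is_cvg_esups.
suff -> : esups (fun n => c%:E * u n) = (fun n => c%:E * esups u n) by [].
apply/funext => n /=.
rewrite -ereal_supZl ?image_comp //; last exact: ltW.
by apply/set0P; exists (u n); exists n => /=.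
Qed.

Lemma limn_einf_eq0_dominated u v (c : R) : (0 < c)%R ->
  (forall n, 0 <= u n) -> (forall n, u n <= c%:E * v n) ->
  limn_einf v = 0 -> limn_einf u = 0.
Proof.
move=> c_gt0 u_ge0 uv v0; apply/eqP; rewrite eq_le limn_einf_ge0 // andbT.
by rewrite -(mule0 c%:E) -v0 -limn_einfZl //; exact: le_limn_einf.
Qed.

Lemma limn_esup_eqy_dominated u v (c : R) : (0 < c)%R ->
  (forall n, v n <= c%:E * u n) ->
  limn_esup v = +oo -> limn_esup u = +oo.
Proof.
move=> c_gt0 vu vy; have := le_limn_esup vu.
rewrite vy limn_esupZl // leye_eq mule_eq_pinfty !lte_fin c_gt0 ltNge (ltW c_gt0) orbF.
exact: eqP.
Qed.

End limn_esup_einf_monotone.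

Definition li_yorke_vector {R : realType} {Y : normedModType R} (T : Y -> Y) (y : Y) :=
  limn_einf (fun n : nat => (`|iter n T y|)%:E) = 0%E /\
  limn_esup (fun n : nat => (`|iter n T y|)%:E) = +oo%E.

Lemma li_yorke_vector_equivalent_orbits {R : realType} {X Y : normedModType R}
    (S : X -> X) (T : Y -> Y) (x : X) (y : Y) (L : R) : 0 < L ->
  (forall n, `|iter n S x| <= L * `|iter n T y|) ->
  (forall n, `|iter n T y| <= L * `|iter n S x|) ->
  li_yorke_vector T y -> li_yorke_vector S x.
Proof.
move=> L_gt0 Sx_le Ty_le [y_inf y_sup]; split.
- apply: (limn_einf_eq0_dominated L_gt0 _ _ y_inf) => n; first by rewrite lee_fin.
  by rewrite -EFinM lee_fin.
- apply: (limn_esup_eqy_dominated L_gt0 _ y_sup) => n.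
  by rewrite -EFinM lee_fin.
Qed.

Theorem lemma3p3 (R : realType) (X Y : completeNormedModType R)
  (S Sinv : X -> X) (T Tinv : Y -> Y) (Pi : X -> Y) :
  separable X -> separable Y ->
  bounded_linear S -> bounded_linear Sinv ->
  cancel S Sinv -> cancel Sinv S ->
  bounded_linear T -> bounded_linear Tinv ->
  cancel T Tinv -> cancel Tinv T ->
  bounded_linear Pi -> (forall y : Y, exists x : X, Pi x = y) ->
  (forall x, Pi (S x) = T (Pi x)) ->
  strong_bounded_selector S Sinv T Tinv Pi ->
  li_yorke_chaotic T -> li_yorke_chaotic S.
Proof.
move=> _ _ _ _ _ _ _ _ _ _ _ _ _ [L [L_ge1 select]] [y y_li_yorke].
have [x [_ x_orbit]] := select y.
exists x; apply: (li_yorke_vector_equivalent_orbits (lt_le_trans ltr01 L_ge1) _ _ y_li_yorke).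
- by move=> n; exact: (x_orbit (Posz n)).1.
- by move=> n; exact: (x_orbit (Posz n)).2.
Qed.
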